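(* For every assessment $\mathcal{A}\subseteq\mathscr{Q}$, $\mathrm{Ex}(\mathcal{A})=\mathrm{Rs}(\mathrm{Posi}(\mathscr{V}^s_{>0}\cup\mathcal{A}))$.
   Context: Let $\mathcal{X}$ be a nonempty set and let $\mathscr{V}$ be the real vector space of all functions $u:\mathcal{X}\to\mathbb{R}$ (options), with pointwise operations. For $u,v\in\mathscr{V}$, $u\le v$ iff $u(x)\le v(x)$ for all $x\in\mathcal{X}$, and $u<v$ iff $u\le v$ and $u\neq v$. Let $\mathscr{V}_{>0}=\{u\in\mathscr{V}:0<u\}$, $\mathscr{V}_{\le0}=\{u\in\mathscr{V}:u\le0\}$ and $\mathscr{V}^s_{>0}=\{\{u\}:u\in\mathscr{V}_{>0}\}$. Let $\mathscr{Q}$ be the set of all finite subsets of $\mathscr{V}$ (including $\emptyset$). For a positive integer $n$, $\mathbb{R}^{n,+}=\{\boldsymbol\lambda\in\mathbb{R}^n:\lambda_j\ge0\ \forall j,\ \sum_j\lambda_j>0\}$, and for $\boldsymbol\lambda\in\mathbb{R}^n$, $\mathbf u=(u_1,\dots,u_n)\in\mathscr{V}^n$, $\boldsymbol\lambda\mathbf u=\sum_{j=1}^n\lambda_ju_j$. A set of desirable option sets is any $K\subseteq\mathscr{Q}$. It is coherent if for all $A,B\in K$: (K0) $A\setminus\{0\}\in K$; (K1) $\{0\}\notin K$; (K2) $\mathscr{V}^s_{>0}\subseteq K$; (K3) $\{\boldsymbol\lambda(\mathbf u)\mathbf u:\mathbf u\in A\times B\}\in K$ for every map $\boldsymbol\lambda:A\times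 B\to\mathbb{R}^{2,+}$; (K4) $A\cup Q\in K$ for all $Q\in\mathscr{Q}$. $\bar{\mathbf K}$ denotes the set of coherent sets of desirable option sets. An assessment is any subset $\mathcal{A}\subseteq\mathscr{Q}$. Let $\bar{\mathbf K}(\mathcal A)=\{K\in\bar{\mathbf K}:\mathcal A\subseteq K\}$ and $\mathrm{Ex}(\mathcal A)=\bigcap\bar{\mathbf K}(\mathcal A)$, with the convention $\bigcap\emptyset=\mathscr{Q}$. For $\mathcal{A}\subseteq\mathscr{Q}$: $\mathrm{Posi}(\mathcal{A})=\{\{\boldsymbol\lambda(\mathbf u)\mathbf u:\mathbf u\in\times_{k=1}^nA_k\}: n\in\mathbb{N},\ A_1,\dots,A_n\in\mathcal A,\ \boldsymbol\lambda:\times_{k=1}^nA_k\to\mathbb{R}^{n,+}\}$ (where $\mathbb{N}$ denotes the positive integers), and $\mathrm{Rs}(\mathcal{A})=\{A\in\mathscr{Q}:\exists B\in\mathcal{A},\ B\setminus\mathscr{V}_{\le0}\subseteq A\}$. *)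

From Stdlib Require Import Reals List.
Open Scope R_scope.

Section Defs.
Variable X : Type.

Definition opt := X -> R.
Definition ozero : opt := fun _ => 0.
Definition oadd (u v : opt) : opt := fun x => u x + v x.
Definition oscale (a : R) (u : opt) : opt := fun x => a * u x.

Definition ole (u v : opt) : Prop := forall x, u x <= v x.
Definition olt (u v : opt) : Prop := ole u v /\ u <> v.

Definition Vgt0 (u : opt) : Prop := olt ozero u.
Definition Vle0 (u : opt) : Prop := ole u ozero.

Definition optset := opt -> Prop.

Definition finite_optset (A : optset) : Prop :=
  exists l : list opt, forall u, A u <-> In u l.

Definition Qset (A : optset) : Prop := finite_optset A.

Definition Vs_gt0 (A : optset) : Prop :=
  exists u, Vgt0 u /\ forall w, A w <-> w = u.

Fixpoint sumR (n : nat) (f : nat -> R) : R :=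
  match n with O => 0 | S m => sumR m f + f m end.
Fixpoint sumV (n : nat) (f : nat -> opt) : opt :=
  match n with O => ozero | S m => oadd (sumV m f) (f m) end.

Definition Rnplus (n : nat) (l : nat -> R) : Prop :=
  (forall k, (k < n)%nat -> 0 <= l k) /\ 0 < sumR n l.

Definition coherent (K : optset -> Prop) : Prop :=
  (forall A, K A -> Qset A) /\
  (forall A, K A -> K (fun u => A u /\ u <> ozero)) /\
  ~ K (fun u => u = ozero) /\
  (forall A, Vs_gt0 A -> K A) /\
  (forall A B, K A -> K B ->
     forall lam : opt -> opt -> R * R,
       (forall u v, A u -> B v ->
          Rnplus 2 (fun k => if Nat.eqb k 0 then fst (lam u v) else snd (lam u v))) ->
       K (fun w => exists u v, A u /\ B v /\
                    w = oadd (oscale (fst (lam u v)) u) (oscale (snd (lam u v)) v))) /\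
  (forall A Q, K A -> Qset Q -> K (fun u => A u \/ Q u)).

(* Ex(A) = intersection of all coherent K containing A  (empty intersection = Q) *)
Definition Ex (As : optset -> Prop) (C : optset) : Prop :=
  Qset C /\ forall K, coherent K -> (forall D, As D -> K D) -> K C.

(* n-tuples of options, encoded as nat -> opt, zero beyond index n (canonical) *)
Definition in_prod (n : nat) (Ak : nat -> optset) (u : nat -> opt) : Prop :=
  (forall k, (k < n)%nat -> Ak k (u k)) /\ (forall k, (n <= k)%nat -> u k = ozero).

Definition Posi (As : optset -> Prop) (C : optset) : Prop :=
  exists (n : nat) (Ak : nat -> optset) (lam : (nat -> opt) -> (nat -> R)),
    (1 <= n)%nat /\
    (forall k, (k < n)%nat -> As (Ak k)) /\
    (forall u, in_prod n Ak u -> Rnplus n (lam u)) /\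
    (forall w, C w <-> exists u, in_prod n Ak u /\
                         w = sumV n (fun k => oscale (lam u k) (u k))).

Definition Rs (As : optset -> Prop) (C : optset) : Prop :=
  Qset C /\ exists B, As B /\ forall u, B u -> ~ Vle0 u -> C u.

End Defs.

From Pilot Require Import Defs.
From Stdlib Require Import Reals List.
From Stdlib Require Import Lra Lia Classical ClassicalEpsilon FunctionalExtensionality PropExtensionality.
Open Scope R_scope.

(* Two facts about an arbitrary coherent set K carry the inclusion
   "Rs(Posi(...)) is contained in Ex(A)":
   - absorption: an element y of some T in K can be replaced by elements
     satisfying P whenever K contains a set D all of whose x combine with y
     (by a nonnegative, nontrivial K3 combination) into elements satisfying P;
     iterating over the finitely many elements of T yields a set in K inside P.
     With P = "nonpositive or in R" this shows that K is closed under removing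
     nonpositive options (up to enlarging by a finite R);
   - Posi closure: if K contains A_1, ..., A_n, then K contains a subset of
     every Posi-combination B of them.  This is proved by fixing the options
     of the tuple one coordinate at a time (a downward induction on the number
     of fixed coordinates), absorbing one coordinate per step.
   Conversely, Rs(Posi(V^s_{>0} u A)) is itself coherent (Posi is closed under
   K3 by concatenating tuples) unless some Posi set is entirely nonpositive,
   in which case Rs(Posi(...)) already contains every finite option set. *)

Lemma sumR_ext n f g : (forall k, (k < n)%nat -> f k = g k) -> sumR n f = sumR n g.
Proof.
  induction n as [|n IH]; simpl; intros H; auto.
  rewrite IH by (intros; apply H; lia). rewrite H by lia. reflexivity.
Qed.

Lemma sumR_app n1 n2 f : sumR (n1 + n2) f = sumR n1 f + sumR n2 (fun k => f (n1 + k)%nat).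
Proof.
  induction n2 as [|n2 IH]; simpl.
  - rewrite Nat.add_0_r; ring.
  - rewrite Nat.add_succ_r; simpl; rewrite IH; ring.
Qed.

Lemma sumR_scale n c f : sumR n (fun k => c * f k) = c * sumR n f.
Proof. induction n as [|n IH]; simpl; [ring | rewrite IH; ring]. Qed.

Lemma sumR_nonneg n f : (forall k, (k < n)%nat -> 0 <= f k) -> 0 <= sumR n f.
Proof.
  induction n as [|n IH]; simpl; intros H; [lra|].
  assert (0 <= f n) by (apply H; lia).
  assert (0 <= sumR n f) by (apply IH; intros; apply H; lia). lra.
Qed.

Lemma sumV_eval X n f x : sumV X n f x = sumR n (fun k => f k x).
Proof. induction n as [|n IH]; simpl; unfold oadd, ozero; auto. rewrite IH; auto. Qed.

Lemma opt_ext X (u v : opt X) : (forall x, u x = v x) -> u = v.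
Proof. intros H; apply functional_extensionality; exact H. Qed.

Lemma Rnplus2_iff (a b : R) :
  Rnplus 2 (fun k => if Nat.eqb k 0 then a else b) <-> 0 <= a /\ 0 <= b /\ 0 < a + b.
Proof.
  unfold Rnplus; simpl; split.
  - intros [Hnn Hs].
    pose proof (Hnn 0%nat ltac:(lia)); pose proof (Hnn 1%nat ltac:(lia)); simpl in *; lra.
  - intros (Ha & Hb & Hab); split; [|lra].
    intros [|[|k]] Hk; simpl; try lra; lia.
Qed.

Lemma pos_combination a b s1 s2 :
  0 <= a -> 0 <= b -> 0 < a + b -> 0 < s1 -> 0 < s2 -> 0 < a * s1 + b * s2.
Proof. intros; destruct (Rlt_le_dec 0 a); nra. Qed.

Lemma combine_1_0 X (u v : opt X) : oadd X (oscale X 1 u) (oscale X 0 v) = u.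
Proof. apply opt_ext; intros x; unfold oadd, oscale; ring. Qed.

Lemma combine_0_1 X (u v : opt X) : oadd X (oscale X 0 u) (oscale X 1 v) = v.
Proof. apply opt_ext; intros x; unfold oadd, oscale; ring. Qed.

Lemma Qset_sub_list X (l : list (opt X)) (B : optset X) :
  (forall u, B u -> In u l) -> Qset X B.
Proof.
  unfold Qset, finite_optset.
  revert B; induction l as [|y l IH]; intros B HB.
  - exists nil. intros u; split; [intros Hu; apply (HB u Hu) | intros []].
  - destruct (IH (fun u => B u /\ u <> y)) as [l' Hl'].
    { intros u [Hu Hne]. destruct (HB u Hu) as [->|H]; [congruence | exact H]. }
    destruct (classic (B y)) as [Hy|Hy].
    + exists (y :: l'). intros u. split.
      * intros Hu. destruct (classic (u = y)) as [->|Hne];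
          [left; reflexivity | right; apply Hl'; auto].
      * intros [<-|Hin]; [exact Hy | apply Hl' in Hin; tauto].
    + exists l'. intros u; split.
      * intros Hu. apply Hl'. split; auto. intros ->; contradiction.
      * intros Hin; apply Hl' in Hin; tauto.
Qed.

Lemma Qset_subset X (A B : optset X) : Qset X A -> (forall u, B u -> A u) -> Qset X B.
Proof. intros [l Hl] H. apply (Qset_sub_list X l). intros u Hu; apply Hl; auto. Qed.

Lemma Qset_union X (A B : optset X) :
  Qset X A -> Qset X B -> Qset X (fun u => A u \/ B u).
Proof.
  intros [l1 H1] [l2 H2]. apply (Qset_sub_list X (l1 ++ l2)).
  intros u [Hu|Hu]; apply in_or_app; [left; apply H1 | right; apply H2]; auto.
Qed.

Lemma Qset_image2 X (A B : optset X) (f : opt X -> opt X -> opt X) :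
  Qset X A -> Qset X B -> Qset X (fun w => exists u v, A u /\ B v /\ w = f u v).
Proof.
  intros [l1 H1] [l2 H2].
  apply (Qset_sub_list X (flat_map (fun u => map (f u) l2) l1)).
  intros w (u & v & Hu & Hv & ->). apply in_flat_map. exists u.
  split; [apply H1; auto | apply in_map; apply H2; auto].
Qed.

Definition extend {T : Type} (a : nat -> T) (j : nat) (b : T) : nat -> T :=
  fun k => if Nat.eqb k j then b else a k.

Definition concat {T : Type} (n1 : nat) (f g : nat -> T) : nat -> T :=
  fun k => if Nat.ltb k n1 then f k else g (k - n1)%nat.

Definition shift {T : Type} (n1 : nat) (f : nat -> T) : nat -> T := fun k => f (n1 + k)%nat.

Lemma concat_lt {T : Type} n1 (f g : nat -> T) k : (k < n1)%nat -> concat n1 f g k = f k.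
Proof. intros Hk; unfold concat; rewrite (proj2 (Nat.ltb_lt _ _) Hk); reflexivity. Qed.

Lemma concat_shift {T : Type} n1 (f g : nat -> T) : shift n1 (concat n1 f g) = g.
Proof.
  apply functional_extensionality; intros k; unfold shift, concat.
  rewrite (proj2 (Nat.ltb_ge _ _) (Nat.le_add_r n1 k)). f_equal; lia.
Qed.

Lemma sumV_concat X n1 n2 (c1 c2 : R) (l1 l2 : nat -> R) (u : nat -> opt X) :
  sumV X (n1 + n2)
    (fun k => oscale X (concat n1 (fun i => c1 * l1 i) (fun i => c2 * l2 i) k) (u k)) =
  oadd X (oscale X c1 (sumV X n1 (fun k => oscale X (l1 k) (concat n1 u (fun _ => ozero X) k))))
         (oscale X c2 (sumV X n2 (fun k => oscale X (l2 k) (shift n1 u k)))).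
Proof.
  apply opt_ext; intros x; unfold oadd, oscale.
  rewrite !sumV_eval, sumR_app, <- !sumR_scale. f_equal.
  - apply sumR_ext; intros k Hk; rewrite !concat_lt by exact Hk; unfold oscale; ring.
  - apply sumR_ext; intros k _.
    change (u (n1 + k)%nat x) with (shift n1 u k x).
    change (concat n1 ?f ?g (n1 + k)%nat) with (shift n1 (concat n1 f g) k).
    rewrite concat_shift; unfold oscale; ring.
Qed.

Lemma sumV_extend X j (nu : nat -> R) a y z :
  sumV X (S j) (fun k => oscale X (nu k) (extend a j y k)) z =
  sumV X j (fun k => oscale X (nu k) (a k)) z + nu j * y z.
Proof.
  rewrite !sumV_eval; simpl. unfold oscale at 2, extend at 2; rewrite Nat.eqb_refl. f_equal.
  apply sumR_ext; intros k Hk; unfold extend. destruct (Nat.eqb_spec k j); [lia | reflexivity].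
Qed.

Lemma in_prod_extend X n Ak (a : nat -> opt X) b :
  Defs.in_prod X n Ak a -> Ak n b -> Defs.in_prod X (S n) Ak (extend a n b).
Proof.
  intros [Ha Hz] Hb; split; intros k Hk; unfold extend; destruct (Nat.eqb_spec k n) as [->|Hne].
  - exact Hb.
  - apply Ha; lia.
  - lia.
  - apply Hz; lia.
Qed.

Lemma in_prod_split X n1 n2 A1 A2 (u : nat -> opt X) :
  Defs.in_prod X (n1 + n2) (concat n1 A1 A2) u ->
  Defs.in_prod X n1 A1 (concat n1 u (fun _ => ozero X)) /\ Defs.in_prod X n2 A2 (shift n1 u).
Proof.
  intros [Hu Hz]; split; split; intros k Hk; unfold shift.
  - rewrite concat_lt by exact Hk. specialize (Hu k ltac:(lia)). rewrite concat_lt in Hu; auto.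
  - unfold concat; rewrite (proj2 (Nat.ltb_ge _ _) Hk); reflexivity.
  - specialize (Hu (n1 + k)%nat ltac:(lia)). rewrite <- (concat_shift n1 A1 A2). exact Hu.
  - apply Hz; lia.
Qed.

Lemma in_prod_concat X n1 n2 A1 A2 (u1 u2 : nat -> opt X) :
  Defs.in_prod X n1 A1 u1 -> Defs.in_prod X n2 A2 u2 ->
  Defs.in_prod X (n1 + n2) (concat n1 A1 A2) (concat n1 u1 u2) /\
  concat n1 (concat n1 u1 u2) (fun _ => ozero X) = u1.
Proof.
  intros [H1 Z1] [H2 Z2]; split; [split|].
  - intros k Hk; unfold concat; destruct (Nat.ltb_spec k n1); [apply H1 | apply H2]; lia.
  - intros k Hk; unfold concat; destruct (Nat.ltb_spec k n1); [lia | apply Z2; lia].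
  - apply functional_extensionality; intros k; unfold concat.
    destruct (Nat.ltb_spec k n1); [reflexivity | symmetry; apply Z1; lia].
Qed.

Lemma Posi_single X (P : optset X -> Prop) A : P A -> Posi X P A.
Proof.
  intros HA. exists 1%nat, (fun _ => A), (fun _ _ => 1).
  split; [lia|]. split; [intros; exact HA|]. split.
  - intros u _. split; [intros; lra | simpl; lra].
  - intros w; split.
    + intros Hw. exists (fun k => match k with O => w | _ => ozero X end). split.
      * split; intros [|k] Hk; auto; lia.
      * apply opt_ext; intros x; simpl; unfold oadd, oscale, ozero; ring.
    + intros [u [[Hu _] ->]].
      replace (sumV X 1 (fun k => oscale X 1 (u k))) with (u 0%nat); [apply Hu; lia|].
      apply opt_ext; intros x; simpl; unfold oadd, oscale, ozero; ring.
Qed.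

(* Posi(F) satisfies K3: a combination of two Posi sets with coefficients
   depending on the pair of elements is again a Posi set, indexed by the
   concatenation of the two tuples. *)
Lemma Posi_combine X (Fam : optset X -> Prop) (B1 B2 : optset X)
      (ab : opt X -> opt X -> R * R) :
  Posi X Fam B1 -> Posi X Fam B2 ->
  (forall b1 b2, B1 b1 -> B2 b2 ->
     0 <= fst (ab b1 b2) /\ 0 <= snd (ab b1 b2) /\ 0 < fst (ab b1 b2) + snd (ab b1 b2)) ->
  Posi X Fam (fun w => exists b1 b2, B1 b1 /\ B2 b2 /\
                 w = oadd X (oscale X (fst (ab b1 b2)) b1) (oscale X (snd (ab b1 b2)) b2)).
Proof.
  intros (n1 & A1 & lam1 & Hn1 & HA1 & Hlam1 & Hiff1)
         (n2 & A2 & lam2 & _ & HA2 & Hlam2 & Hiff2) Hab.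
  set (first := fun u : nat -> opt X => concat n1 u (fun _ => ozero X)).
  set (b1 := fun u => sumV X n1 (fun k => oscale X (lam1 (first u) k) (first u k))).
  set (b2 := fun u => sumV X n2 (fun k => oscale X (lam2 (shift n1 u) k) (shift n1 u k))).
  set (lam := fun u => concat n1 (fun k => fst (ab (b1 u) (b2 u)) * lam1 (first u) k)
                                 (fun k => snd (ab (b1 u) (b2 u)) * lam2 (shift n1 u) k)).
  assert (Hsum : forall u, sumV X (n1 + n2) (fun k => oscale X (lam u k) (u k)) =
            oadd X (oscale X (fst (ab (b1 u) (b2 u))) (b1 u))
                   (oscale X (snd (ab (b1 u) (b2 u))) (b2 u)))
    by (intros u; apply sumV_concat).
  (* the tuple u splits into (first u, shift n1 u), weighted by ab on the halves *)
  exists (n1 + n2)%nat, (concat n1 A1 A2), lam.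
  split; [lia|]. split; [|split].
  - intros k Hk; unfold concat; destruct (Nat.ltb_spec k n1); [apply HA1 | apply HA2]; lia.
  - intros u Hu. destruct (in_prod_split X n1 n2 A1 A2 u Hu) as [Hf Hs].
    destruct (Hlam1 _ Hf) as [Hnn1 Hpos1], (Hlam2 _ Hs) as [Hnn2 Hpos2].
    assert (Hb1 : B1 (b1 u)) by (apply Hiff1; exists (first u); auto).
    assert (Hb2 : B2 (b2 u)) by (apply Hiff2; exists (shift n1 u); auto).
    destruct (Hab _ _ Hb1 Hb2) as (Ha & Hb & Hab').
    split.
    + intros k Hk; unfold lam, concat; destruct (Nat.ltb_spec k n1).
      * apply Rmult_le_pos; auto.
      * apply Rmult_le_pos; auto; apply Hnn2; lia.
    + rewrite sumR_app.
      replace (sumR n1 (lam u)) with (fst (ab (b1 u) (b2 u)) * sumR n1 (lam1 (first u)))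
        by (rewrite <- sumR_scale; apply sumR_ext; intros k Hk; unfold lam; rewrite concat_lt; auto).
      change (fun k => lam u (n1 + k)%nat) with (shift n1 (lam u)).
      unfold lam at 1; rewrite concat_shift, sumR_scale. apply pos_combination; auto.
  - intros w; split.
    + intros (v1 & v2 & Hv1 & Hv2 & ->).
      apply Hiff1 in Hv1; destruct Hv1 as (u1 & Hu1 & ->).
      apply Hiff2 in Hv2; destruct Hv2 as (u2 & Hu2 & ->).
      destruct (in_prod_concat X n1 n2 A1 A2 u1 u2 Hu1 Hu2) as [Hu Hfirst].
      exists (concat n1 u1 u2); split; [exact Hu|].
      rewrite Hsum; unfold b1, b2, first; rewrite Hfirst, concat_shift; reflexivity.
    + intros (u & Hu & ->). destruct (in_prod_split X n1 n2 A1 A2 u Hu) as [Hf Hs].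
      exists (b1 u), (b2 u); split; [apply Hiff1; exists (first u); auto|].
      split; [apply Hiff2; exists (shift n1 u); auto | apply Hsum].
Qed.

Section Coherent.
Variable X : Type.
Variable K : optset X -> Prop.
Hypothesis HK : coherent X K.

Let K_finite : forall A, K A -> Qset X A := proj1 HK.
Let K_drop_zero : forall A, K A -> K (fun u => A u /\ u <> ozero X) :=
  proj1 (proj2 HK).
Let K_combine := proj1 (proj2 (proj2 (proj2 (proj2 HK)))).
Let K_union : forall A Q, K A -> Qset X Q -> K (fun u => A u \/ Q u) :=
  proj2 (proj2 (proj2 (proj2 (proj2 HK)))).

Lemma K_positive (A : optset X) : Vs_gt0 X A -> K A.
Proof. exact (proj1 (proj2 (proj2 (proj2 HK))) A). Qed.

Definition handled (P : opt X -> Prop) (y : opt X) : Prop :=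
  exists D, K D /\ forall x, D x -> exists a b, 0 <= a /\ 0 <= b /\ 0 < a + b /\
    P (oadd X (oscale X a y) (oscale X b x)).

(* A handled element y of T can be traded, through axiom K3 applied to T and
   D, for options satisfying P, leaving the other elements of T untouched. *)
Lemma absorb_one (P : opt X -> Prop) (T : optset X) (y : opt X) :
  K T -> handled P y -> exists T', K T' /\ forall w, T' w -> P w \/ (T w /\ w <> y).
Proof.
  intros HT [D [HD Hcomb]].
  assert (Hg : exists g : opt X -> R * R, forall x, D x ->
            0 <= fst (g x) /\ 0 <= snd (g x) /\ 0 < fst (g x) + snd (g x) /\
            P (oadd X (oscale X (fst (g x)) y) (oscale X (snd (g x)) x))).
  { apply (choice (fun x p => D x -> 0 <= fst p /\ 0 <= snd p /\ 0 < fst p + snd p /\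
                       P (oadd X (oscale X (fst p) y) (oscale X (snd p) x)))).
    intros x; destruct (classic (D x)) as [Dx|nDx].
    - destruct (Hcomb x Dx) as (a & b & H); exists (a, b); auto.
    - exists (1, 0); intros Dx; contradiction. }
  destruct Hg as [g Hg].
  (* y is combined with the elements of D, every other t is kept as 1 t + 0 x *)
  set (lam := fun t x => if excluded_middle_informative (t = y) then g x else (1, 0)).
  exists (fun w => exists t x, T t /\ D x /\
            w = oadd X (oscale X (fst (lam t x)) t) (oscale X (snd (lam t x)) x)).
  split.
  - apply K_combine; auto. intros t x _ Dx; apply Rnplus2_iff; unfold lam.
    destruct (excluded_middle_informative (t = y)).
    + destruct (Hg x Dx) as (? & ? & ? & _); auto.
    + simpl; lra.
  - intros w (t & x & Tt & Dx & ->); unfold lam.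
    destruct (excluded_middle_informative (t = y)) as [->|Hne].
    + left; apply Hg; auto.
    + right; simpl; rewrite combine_1_0; auto.
Qed.

(* Absorption: if every element of T in K satisfies P or is handled towards
   P, then K contains a set all of whose elements satisfy P.  The handled
   elements are absorbed one by one along an enumeration of T. *)
Lemma absorb (P : opt X -> Prop) (T : optset X) :
  K T -> (forall t, T t -> P t \/ handled P t) ->
  exists T', K T' /\ forall t, T' t -> P t.
Proof.
  intros HT Hh. destruct (K_finite T HT) as [l Hl].
  assert (Hiter : forall l T, K T -> (forall t, T t -> P t \/ (In t l /\ handled P t)) ->
            exists T', K T' /\ forall t, T' t -> P t).
  { clear T HT Hh l Hl. intros l; induction l as [|y l IH]; intros T HT HTl.
    - exists T; split; auto. intros t Ht; destruct (HTl t Ht) as [|[[] _]]; auto.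
    - destruct (classic (handled P y)) as [Hy|Hy].
      + destruct (absorb_one P T y HT Hy) as [T' [HT' HT'T]].
        apply (IH T' HT'). intros w Hw.
        destruct (HT'T w Hw) as [|[Tw Hne]]; auto.
        destruct (HTl w Tw) as [|[[<-|Hin] Hhw]]; auto; contradiction.
      + apply (IH T HT). intros t Ht.
        destruct (HTl t Ht) as [|[[<-|Hin] Hht]]; auto; contradiction. }
  apply (Hiter l T HT). intros t Ht.
  destruct (Hh t Ht); auto. right; split; auto; apply Hl; auto.
Qed.

(* A nonzero
   nonpositive t is handled towards 0 by the singleton {-t} in V^s_{>0}. *)
Lemma remove_nonpositive (T R : optset X) :
  K T -> Qset X R -> (forall t, T t -> Vle0 X t \/ R t) -> K R.
Proof.
  intros HT HR HTR.
  destruct (absorb (fun t => R t \/ t = ozero X) T HT) as [T' [HT' HP]].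
  - intros y Hy. destruct (HTR y Hy) as [Hle|Hr]; [|left; left; auto].
    destruct (classic (y = ozero X)) as [Hz|Hne]; [left; right; auto | right].
    exists (fun w => w = (fun x => - y x)). split.
    + apply K_positive. exists (fun x => - y x). split; [split|].
      * intros x; unfold ozero; specialize (Hle x); unfold ozero in Hle; lra.
      * intros Heq; apply Hne; apply opt_ext; intros x.
        assert (E := f_equal (fun f => f x) Heq); unfold ozero in *; simpl in E; lra.
      * intros w; split; auto.
    + intros x ->. exists 1, 1. split; [lra | split; [lra | split; [lra|]]]. right.
      apply opt_ext; intros z; unfold oadd, oscale, ozero; ring.
  - assert (E : (fun u => (T' u /\ u <> ozero X) \/ R u) = R).
    { apply functional_extensionality; intros u; apply propositional_extensionality.
      split; [intros [[Tu Hne]|Hr]; [destruct (HP u Tu); [auto | contradiction] | auto] | auto]. }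
    rewrite <- E. apply K_union; auto.
Qed.

(* Write B for the Posi set with sets A_0, ..., A_(n-1) and
   coefficients lam.  After fixing options a_0, ..., a_(j-1), an option t is
   tagged if some nonnegative, nontrivial combination of t and a_0, ...,
   a_(j-1) lies in P; [reaches P j a] says that a set of K consists of tagged
   options.  With P = B this holds for j = n (take c = 0 and the weights lam),
   and it propagates down to j = 0 by absorbing one coordinate at a time. *)
Definition tagged (P : opt X -> Prop) (j : nat) (a : nat -> opt X) (t : opt X) : Prop :=
  exists c (nu : nat -> R), 0 <= c /\ (forall k, (k < j)%nat -> 0 <= nu k) /\
    0 < c + sumR j nu /\ P (oadd X (oscale X c t) (sumV X j (fun k => oscale X (nu k) (a k)))).

Definition reaches (P : opt X -> Prop) (j : nat) (a : nat -> opt X) : Prop :=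
  exists T, K T /\ forall t, T t -> tagged P j a t.

(* With no coordinate fixed, a tagged option is a positive multiple of an
   option in P, so it is handled towards P by any set of K. *)
Lemma reaches_zero (P : opt X -> Prop) (a : nat -> opt X) :
  reaches P 0 a -> exists T, K T /\ forall t, T t -> P t.
Proof.
  intros [T [HT Htag]]. apply (absorb P T HT). intros y Hy; right.
  exists T; split; auto. intros x _.
  destruct (Htag y Hy) as (c & nu & Hc & _ & Hs & HP); simpl in Hs.
  exists c, 0. split; [lra | split; [lra | split; [lra|]]].
  replace (oadd X (oscale X c y) (oscale X 0 x)) with
    (oadd X (oscale X c y) (sumV X 0 (fun k => oscale X (nu k) (a k)))); auto.
  apply opt_ext; intros z; simpl; unfold oadd, oscale, ozero; ring.
Qed.

(* Freeing the coordinate j: if fixing it to any b of a set A of K reaches P,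
   then so does leaving it free, since each such b is handled towards the
   options tagged at level j. *)
Lemma reaches_step (P : opt X -> Prop) (A : optset X) (j : nat) (a : nat -> opt X) :
  K A -> (forall b, A b -> reaches P (S j) (extend a j b)) -> reaches P j a.
Proof.
  intros HA Hb. apply (absorb (tagged P j a) A HA). intros y Hy; right.
  destruct (Hb y Hy) as [D [HD Htag]]. exists D; split; auto. intros x Dx.
  destruct (Htag x Dx) as (c & nu & Hc & Hnu & Hs & HP); simpl in Hs.
  assert (Hnj : 0 <= nu j) by (apply Hnu; lia).
  assert (Hsn : 0 <= sumR j nu) by (apply sumR_nonneg; intros; apply Hnu; lia).
  assert (Hnu' : forall k, (k < j)%nat -> 0 <= nu k) by (intros; apply Hnu; lia).
  destruct (Rlt_le_dec 0 (c + nu j)) as [Hp|Hp].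
  - (* combine y and x with weights nu j and c *)
    exists (nu j), c. split; [lra | split; [lra | split; [lra|]]].
    exists 1, nu. split; [lra | split; [exact Hnu' | split; [lra|]]].
    replace (oadd X (oscale X 1 (oadd X (oscale X (nu j) y) (oscale X c x)))
               (sumV X j (fun k => oscale X (nu k) (a k))))
      with (oadd X (oscale X c x) (sumV X (S j) (fun k => oscale X (nu k) (extend a j y k))));
      auto.
    apply opt_ext; intros z; unfold oadd at 1 3; rewrite sumV_extend; unfold oadd, oscale; ring.
  - (* both weights vanish: keep y and tag it with weight 0 *)
    assert (c = 0) by lra; assert (Hz : nu j = 0) by lra; subst c.
    exists 1, 0. split; [lra | split; [lra | split; [lra|]]].
    exists 0, nu. split; [lra | split; [exact Hnu' | split; [lra|]]].
    replace (oadd X (oscale X 0 (oadd X (oscale X 1 y) (oscale X 0 x)))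
               (sumV X j (fun k => oscale X (nu k) (a k))))
      with (oadd X (oscale X 0 x) (sumV X (S j) (fun k => oscale X (nu k) (extend a j y k))));
      auto.
    apply opt_ext; intros z; unfold oadd at 1 3; rewrite sumV_extend, Hz; unfold oadd, oscale; ring.
Qed.

Lemma Posi_contains_K_set (Fam : optset X -> Prop) :
  (forall A, Fam A -> K A) ->
  forall B, Posi X Fam B -> exists T, K T /\ forall t, T t -> B t.
Proof.
  intros HFam B (n & Ak & lam & Hn & HAk & Hlam & HB).
  assert (Hreach : forall m j a, (j + m = n)%nat -> Defs.in_prod X j Ak a -> reaches B j a).
  { intros m; induction m as [|m IH]; intros j a Hjm Ha.
    - rewrite Nat.add_0_r in Hjm; subst j.
      exists (Ak 0%nat); split; [apply HFam, HAk; lia|].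
      intros t _. destruct (Hlam a Ha) as [Hnn Hpos].
      exists 0, (lam a). split; [lra | split; [exact Hnn | split; [lra|]]].
      apply HB. exists a; split; auto.
      apply opt_ext; intros z; unfold oadd, oscale at 1; ring.
    - apply (reaches_step B (Ak j) j a); [apply HFam, HAk; lia|].
      intros b Hb; apply IH; [lia | apply in_prod_extend; auto]. }
  apply (reaches_zero B (fun _ => ozero X)), (Hreach n 0%nat); auto.
  split; intros k Hk; [lia | reflexivity].
Qed.

End Coherent.

(* Rs(Posi(F)) satisfies K3: combine the two underlying Posi sets, using the
   given coefficients on pairs of positive-part elements and the coefficients
   (1,0) or (0,1) when one of the two elements is nonpositive, so that every
   non-nonpositive element of the combination is a combination of the sets. *)
Lemma Rs_combine X (Fam : optset X -> Prop) (A1 A2 : optset X)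
      (lam : opt X -> opt X -> R * R) :
  Rs X (Posi X Fam) A1 -> Rs X (Posi X Fam) A2 ->
  (forall u v, A1 u -> A2 v ->
     Rnplus 2 (fun k => if Nat.eqb k 0 then fst (lam u v) else snd (lam u v))) ->
  Rs X (Posi X Fam) (fun w => exists u v, A1 u /\ A2 v /\
      w = oadd X (oscale X (fst (lam u v)) u) (oscale X (snd (lam u v)) v)).
Proof.
  intros [HQ1 [B1 [HP1 HB1]]] [HQ2 [B2 [HP2 HB2]]] Hlam. split.
  { apply (Qset_image2 X A1 A2
             (fun u v => oadd X (oscale X (fst (lam u v)) u) (oscale X (snd (lam u v)) v)));
      auto. }
  set (ab := fun b1 b2 => if excluded_middle_informative (Vle0 X b1) then (1, 0)
                          else if excluded_middle_informative (Vle0 X b2) then (0, 1)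
                          else lam b1 b2).
  eexists; split; [apply (Posi_combine X Fam B1 B2 ab HP1 HP2)|].
  - intros b1 b2 Hb1 Hb2; unfold ab.
    destruct (excluded_middle_informative (Vle0 X b1)); [simpl; lra|].
    destruct (excluded_middle_informative (Vle0 X b2)); [simpl; lra|].
    apply Rnplus2_iff, Hlam; auto.
  - intros w (b1 & b2 & Hb1 & Hb2 & ->) Hw; unfold ab in *.
    destruct (excluded_middle_informative (Vle0 X b1)) as [Hn1|Hn1].
    { simpl in Hw; rewrite combine_1_0 in Hw; contradiction. }
    destruct (excluded_middle_informative (Vle0 X b2)) as [Hn2|Hn2].
    { simpl in Hw; rewrite combine_0_1 in Hw; contradiction. }
    exists b1, b2; auto.
Qed.

Lemma Rs_coherent X (Fam : optset X -> Prop) :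
  (forall A, Vs_gt0 X A -> Fam A) ->
  ~ (exists B, Posi X Fam B /\ forall u, B u -> Vle0 X u) ->
  coherent X (Rs X (Posi X Fam)).
Proof.
  intros HV Hno. split; [|split; [|split; [|split; [|split]]]].
  - intros A [HQ _]; exact HQ.
  - intros A [HQ [B [HB HBA]]]. split.
    + apply (Qset_subset X A); auto. intros u [Hu _]; auto.
    + exists B; split; auto. intros u Bu Hn. split; [apply HBA; auto|].
      intros ->; apply Hn. intros x; unfold ozero; lra.
  - intros [HQ [B [HB HBA]]]. apply Hno. exists B; split; auto. intros u Bu.
    destruct (classic (Vle0 X u)) as [H|H]; auto.
    rewrite (HBA u Bu H). intros x; unfold ozero; lra.
  - intros A HA. split.
    + destruct HA as [u [_ Hu]]. exists (u :: nil). intros w; rewrite Hu; simpl.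
      split; [auto | intros [H|[]]; auto].
    + exists A. split; [apply Posi_single; auto | auto].
  - intros A B HA HB lam Hlam. apply Rs_combine; auto.
  - intros A Q [HQ [B [HB HBA]]] HQQ. split.
    + apply Qset_union; auto.
    + exists B; split; auto.
Qed.

(* Main theorem: Ex(A) = Rs(Posi(V^s_{>0} u A)).
   (->) Either some Posi set is entirely nonpositive, and then every finite set
        is in the right-hand side, or Rs(Posi(...)) is a coherent set
        containing A, hence contains Ex(A).
   (<-) A coherent K containing A contains a subset T of the Posi set B, and
        all elements of T outside C are nonpositive, so C is in K. *)
Theorem mainTheorem14 (X : Type) (x0 : X) (As : optset X -> Prop) :
  (forall A, As A -> Qset X A) ->
  forall C : optset X,
    Ex X As C <-> Rs X (Posi X (fun A => Vs_gt0 X A \/ As A)) C.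
Proof.
  intros HAs C; split.
  - intros [HC HEx].
    destruct (classic (exists B, Posi X (fun A => Vs_gt0 X A \/ As A) B /\
                                 forall u, B u -> Vle0 X u)) as [[B [HB Hle]]|Hno].
    + split; auto. exists B; split; auto. intros u Bu Hn; exfalso; auto.
    + apply HEx; [apply Rs_coherent; auto|].
      intros D HD. split; auto. exists D; split; [apply Posi_single; right; auto | auto].
  - intros [HC [B [HB HBC]]]. split; [exact HC|]. intros K HK HAsK.
    destruct (Posi_contains_K_set X K HK (fun A => Vs_gt0 X A \/ As A)) with (B := B)
      as [T [HT HTB]]; auto.
    { intros A [HA|HA]; auto. apply (K_positive X K HK); auto. }
    apply (remove_nonpositive X K HK T C HT HC). intros t Ht.
    destruct (classic (Vle0 X t)); auto.
Qed.
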